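(* Let $A$ be a ring, $a\in A$, and $B$ a ring extension of $A$ (so $A\subseteq B$) such that $B_a=B[1/a]$ is integral over $A_a=A[1/a]$. Then $a\cdot\big((\mathrm{Jac}_B 0)\cap A\big)\subseteq \mathrm{Jac}_A 0$.
   Context: All rings are commutative with identity. The setting is constructive mathematics: no law of excluded middle and no Zorn's lemma. For a ring $A$ and a subset $U\subseteq A$, $\langle U\rangle_A$ denotes the ideal generated by $U$. Define $\mathrm{Jac}_A U:=\{a\in A:\forall b\in A,\ 1\in\langle U\cup\{1-ab\}\rangle_A\}$. Thus $\mathrm{Jac}_A 0=\{a\in A: \forall b\in A,\ 1-ab \text{ is invertible}\}$. *)

From mathcomp Require Import all_boot all_algebra.
Set Implicit Arguments. Unset Strict Implicit. Unset Printing Implicit Defensive.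
Import GRing.Theory.
Local Open Scope ring_scope.

Definition invertible (R : comPzRingType) (u : R) : Prop := exists v : R, u * v = 1.

Definition Jac0 (R : comPzRingType) (x : R) : Prop :=
  forall y : R, invertible (1 - x * y).

(* "B[1/a] is integral over A[1/a]", where f : A -> B is the structure map
   and a : A is inverted (via f a in B).  Elements of B[1/a] are fractions
   b / (f a)^k; coefficients in A[1/a] are written over a common denominator
   a^e.  The element b/(f a)^k is integral over A[1/a] iff there is a monic
   relation
      (b/a^k)^n + sum_{i<n} (c_i/a^e) (b/a^k)^i = 0   in B[1/a],
   i.e. (multiplying by the unit a^(e+k n)) iff for some N
      a^N * ( a^e b^n + sum_{i<n} c_i b^i a^(k (n-i)) ) = 0   in B. *)
Definition loc_integral (A B : comPzRingType) (f : A -> B) (a : A) : Prop :=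
  forall (b : B) (k : nat),
    exists (n : nat) (c : 'I_n -> A) (e N : nat),
      f a ^+ N *
        (f a ^+ e * b ^+ n
         + \sum_(i < n) f (c i) * b ^+ i * f a ^+ (k * (n - i))) = 0.

From mathcomp Require Import all_boot all_algebra.
From mathcomp Require Import ring.
Set Implicit Arguments. Unset Strict Implicit. Unset Printing Implicit Defensive.
Import GRing.Theory.
Local Open Scope ring_scope.

(* Put u := 1 - a x y.  Its image in B is 1 - x (a y), a unit since x is
   in Jac_B 0.  The inverse v of u is integral over A[1/a]; multiplying its
   integral equation by u^n turns it into an equation in A saying that u
   divides a power a^M.  Hence u divides (a x y)^M = (1 - u)^M, which is
   congruent to 1 modulo u, so u is a unit. *)

Lemma exp_subr1_mulr (R : comPzRingType) (u : R) (M : nat) :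
  exists s, (1 - u) ^+ M = 1 - u * s.
Proof.
elim: M => [|M [s IHs]]; first by exists 0; rewrite expr0 mulr0 subr0.
by exists (s + 1 - u * s); rewrite exprS IHs; ring.
Qed.

Lemma invertible_of_exp_subr1 (R : comPzRingType) (u w : R) (M : nat) :
  (1 - u) ^+ M = u * w -> invertible u.
Proof.
have [s ->] := exp_subr1_mulr u M => uw.
by exists (s + w); rewrite mulrDr -uw; ring.
Qed.

(* Clearing the denominator u^n of a polynomial relation in v = u^-1 yields
   the reversed polynomial evaluated at u. *)
Lemma mulr_exp_inverse_sum (R : comPzRingType) (u v d : R) (n : nat)
    (c : 'I_n -> R) :
  u * v = 1 ->
  u ^+ n * (d * v ^+ n + \sum_(i < n) c i * v ^+ i)
    = d + u * \sum_(i < n) c i * u ^+ (n - i.+1).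
Proof.
move=> uv1; have uvX k : u ^+ k * v ^+ k = 1 by rewrite -exprMn uv1 expr1n.
rewrite mulrDr mulrCA uvX mulr1; congr (_ + _).
rewrite !mulr_sumr; apply: eq_bigr => i _.
have -> : u ^+ n = u * u ^+ (n - i.+1) * u ^+ i.
  by rewrite -exprS -exprD subnSK // subnK // ltnW.
by rewrite -[RHS]mulr1 -(uvX i); ring.
Qed.

Section LocalIntegrality.

Variables (A B : comPzRingType) (f : {rmorphism A -> B}) (a : A).
Hypotheses (f_inj : injective f) (hint : loc_integral f a).

(* The conclusion says that u is a unit of A[1/a]: units of A[1/a] that
   become units of B[1/a] were already units. *)
Lemma dvd_exp_of_invertible_image (u : A) :
  invertible (f u) -> exists M w, a ^+ M = u * w.
Proof.
case=> v uv1; have [n [c [e [N rel]]]] := hint v 0.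
move: rel; under eq_bigr do rewrite mul0n expr0 mulr1; move=> rel.
pose s := \sum_(i < n) c i * u ^+ (n - i.+1).
have rel_u : a ^+ N * (a ^+ e + u * s) = 0.
  apply: f_inj; rewrite rmorph0 -(mulr0 (f u ^+ n)) -rel mulrCA.
  rewrite mulr_exp_inverse_sum // !(rmorphM, rmorphD, rmorphXn, rmorph_sum).
  by under eq_bigr do rewrite rmorphM rmorphXn.
exists (N + e), (- (a ^+ N * s)).
by apply/eqP; rewrite mulrN -subr_eq0 opprK exprD mulrCA -mulrDr rel_u.
Qed.

End LocalIntegrality.

Theorem mainTheorem8 (A B : comPzRingType) (f : {rmorphism A -> B})
  (f_inj : injective f) (a : A)
  (hint : loc_integral f a) :
  forall x : A, Jac0 (f x) -> Jac0 (a * x).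
Proof.
move=> x jac_x y; set u := 1 - a * x * y.
have unit_fu : invertible (f u).
  suff -> : f u = 1 - f x * f (a * y) by apply: jac_x.
  by rewrite /u rmorphB rmorph1 !rmorphM /=; ring.
have [M [w aMu]] := dvd_exp_of_invertible_image f_inj hint unit_fu.
apply: (@invertible_of_exp_subr1 _ _ (w * (x * y) ^+ M) M).
have -> : 1 - u = a * (x * y) by rewrite /u; ring.
by rewrite exprMn aMu mulrA.
Qed.
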